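(* Let $\mathcal{LS}_{\mathfrak{B}_1}$ be the operad (variety) of left-symmetric algebras over a field of characteristic $0$ satisfying the identity $(ab)c-(ba)c-(ac)b+(ca)b+(bc)a-(cb)a=0$. Its Koszul dual operad $\mathcal{LS}_{\mathfrak{B}_1}^{(!)}$ is the operad of assosymmetric algebras satisfying the left-commutative identity $a(bc)=b(ac)$.
   Context: A left-symmetric algebra is an algebra whose associator $(a,b,c)=(ab)c-a(bc)$ satisfies $(a,b,c)=(b,a,c)$. An algebra is assosymmetric if its associator is invariant under all permutations of $a,b,c$. The Koszul dual of a binary quadratic operad is taken in the sense of Ginzburg–Kapranov; equivalently, $\mathcal{P}^{(!)}$ is the quadratic operad whose algebras $U$ are defined by exactly those degree-3 identities making $S\otimes U$, with product $(a\otimes u)(b\otimes v)=ab\otimes uv$, Lie-admissible for every $\mathcal{P}$-algebra $S$. *)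

From HB Require Import structures.
From mathcomp Require Import all_boot all_order fingroup perm all_algebra.
Set Implicit Arguments. Unset Strict Implicit. Unset Printing Implicit Defensive.
Import GRing.Theory.
Local Open Scope ring_scope.

(* Multilinear degree-3 nonassociative monomials in the variables x_0=a, x_1=b, x_2=c:
   (false, s) stands for (x_{s 0} x_{s 1}) x_{s 2}   (left-normed),
   (true,  s) stands for  x_{s 0} (x_{s 1} x_{s 2})  (right-normed).
   This is a basis of the 12-dimensional space of multilinear degree-3 elements
   of the free (magmatic) algebra; a multilinear identity of degree 3 is a
   coefficient function on this basis. *)
Definition mono := (bool * 'S_3)%type.
Definition poly3 (F : fieldType) := mono -> F.

Definition o0 : 'I_3 := @Ordinal 3 0 isT.
Definition o1 : 'I_3 := @Ordinal 3 1 isT.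
Definition o2 : 'I_3 := @Ordinal 3 2 isT.

Definition mon (F : fieldType) (b : bool) (i j k : 'I_3) : poly3 F :=
  fun m => if [&& m.1 == b, m.2 o0 == i, m.2 o1 == j & m.2 o2 == k] then 1 else 0.

Definition L (F : fieldType) := @mon F false.
Definition R (F : fieldType) := @mon F true.

Definition padd (F : fieldType) (f g : poly3 F) : poly3 F := fun m => f m + g m.
Definition psub (F : fieldType) (f g : poly3 F) : poly3 F := fun m => f m - g m.

Definition assoc (F : fieldType) (i j k : 'I_3) : poly3 F :=
  psub (L F i j k) (R F i j k).

Definition p_LS (F : fieldType) : poly3 F := psub (assoc F o0 o1 o2) (assoc F o1 o0 o2).
Definition p_B1 (F : fieldType) : poly3 F :=
  padd (psub (L F o0 o1 o2) (L F o1 o0 o2))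
  (padd (psub (L F o2 o0 o1) (L F o0 o2 o1))
        (psub (L F o1 o2 o0) (L F o2 o1 o0))).
(* assosymmetric: (a,b,c) - (b,a,c) and (a,b,c) - (a,c,b) (these generate
   invariance under all permutations) *)
Definition p_AS1 (F : fieldType) : poly3 F := psub (assoc F o0 o1 o2) (assoc F o1 o0 o2).
Definition p_AS2 (F : fieldType) : poly3 F := psub (assoc F o0 o1 o2) (assoc F o0 o2 o1).
Definition p_LC (F : fieldType) : poly3 F := psub (R F o0 o1 o2) (R F o1 o0 o2).

(* Substitution x_j |-> x_{t j} acting on multilinear polynomials:
   monomial (b, s) is sent to (b, s * t) (mathcomp: (s * t) x = t (s x)). *)
Definition pact (F : fieldType) (t : 'S_3) (f : poly3 F) : poly3 F :=
  fun m => f (m.1, m.2 * t^-1)%g.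

Definition pzero (F : fieldType) : poly3 F := fun _ => 0.

(* The space of multilinear degree-3 consequences of a finite list of
   multilinear identities: the S_3-submodule they generate. *)
Definition in_ideal (F : fieldType) (gens : seq (poly3 F)) (g : poly3 F) : Prop :=
  exists c : nat -> 'S_3 -> F, forall m : mono,
    g m = \sum_(k < size gens) \sum_(t : 'S_3) c k t * pact t (nth (@pzero F) gens k) m.

(* Ginzburg-Kapranov pairing on the 12-dimensional space, derived from the
   Lie-admissibility of S (x) U: left-normed monomials get sgn(s), right-normed
   get -sgn(s). *)
Definition eps (F : fieldType) (m : mono) : F :=
  if m.1 then - (-1) ^+ odd_perm m.2 else (-1) ^+ odd_perm m.2.

Definition pairing (F : fieldType) (f g : poly3 F) : F :=
  \sum_(m : mono) eps F m * f m * g m.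

(* The relation space of the Koszul dual: the orthogonal complement. *)
Definition in_dual (F : fieldType) (gens : seq (poly3 F)) (g : poly3 F) : Prop :=
  forall r : poly3 F, in_ideal gens r -> pairing g r = 0.

Definition LS_B1_rels (F : fieldType) : seq (poly3 F) := [:: p_LS F; p_B1 F].
Definition AS_LC_rels (F : fieldType) : seq (poly3 F) := [:: p_AS1 F; p_AS2 F; p_LC F].

From mathcomp Require Import all_boot all_order fingroup perm all_algebra.
From mathcomp Require Import ring.
Set Implicit Arguments. Unset Strict Implicit. Unset Printing Implicit Defensive.
Import GRing.Theory.
Local Open Scope ring_scope.

(* Both sides are subspaces of the 12-dimensional space of multilinear
   degree-3 monomials, and the pairing is S_3-equivariant up to the sign of
   the permutation.  Hence the inclusion of the AS/LC consequences in the
   orthogonal of the LS/B1 consequences reduces to the vanishing of the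
   pairing between each AS/LC generator and each S_3-translate of an LS/B1
   generator, a finite computation.  Conversely, orthogonality to four
   particular translates imposes four independent linear conditions on the
   coefficients of g, and every g satisfying them is written explicitly as a
   combination of translates of the AS/LC generators; both spaces have
   dimension 8. *)

(* The monomial [(b, w_xyz)] has variable sequence [x y z]. *)
Definition w_abc : 'S_3 := 1%g.
Definition w_acb : 'S_3 := tperm o1 o2.
Definition w_bac : 'S_3 := tperm o0 o1.
Definition w_bca : 'S_3 := (tperm o1 o2 * tperm o0 o1)%g.
Definition w_cab : 'S_3 := (tperm o0 o1 * tperm o1 o2)%g.
Definition w_cba : 'S_3 := tperm o0 o2.

Lemma w_abcE : (w_abc o0 = o0) * (w_abc o1 = o1) * (w_abc o2 = o2) * (odd_perm w_abc = false).
Proof. by rewrite /w_abc !perm1 odd_perm1. Qed.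
Lemma w_acbE : (w_acb o0 = o0) * (w_acb o1 = o2) * (w_acb o2 = o1) * (odd_perm w_acb = true).
Proof. by rewrite /w_acb !permE /= odd_tperm. Qed.
Lemma w_bacE : (w_bac o0 = o1) * (w_bac o1 = o0) * (w_bac o2 = o2) * (odd_perm w_bac = true).
Proof. by rewrite /w_bac !permE /= odd_tperm. Qed.
Lemma w_bcaE : (w_bca o0 = o1) * (w_bca o1 = o2) * (w_bca o2 = o0) * (odd_perm w_bca = false).
Proof. by rewrite /w_bca !permM !permE /= odd_permM !odd_tperm. Qed.
Lemma w_cabE : (w_cab o0 = o2) * (w_cab o1 = o0) * (w_cab o2 = o1) * (odd_perm w_cab = false).
Proof. by rewrite /w_cab !permM !permE /= odd_permM !odd_tperm. Qed.
Lemma w_cbaE : (w_cba o0 = o2) * (w_cba o1 = o1) * (w_cba o2 = o0) * (odd_perm w_cba = true).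
Proof. by rewrite /w_cba !permE /= odd_tperm. Qed.

Definition wordE := (w_abcE, w_acbE, w_bacE, w_bcaE, w_cabE, w_cbaE).

Definition S3_words := [:: w_abc; w_acb; w_bac; w_bca; w_cab; w_cba].

Lemma perm_eqF (T : finType) (s t : {perm T}) x y :
  (s x != t x) || (s y != t y) -> (s == t) = false.
Proof. by move=> neq_st; apply/negbTE; apply: contraTneq neq_st => ->; rewrite !eqxx. Qed.

Lemma S3_words_uniq : uniq S3_words.
Proof. by rewrite /= !inE; do !(rewrite (perm_eqF (x := o0) (y := o1)); last by rewrite !wordE). Qed.

Lemma S3_words_perm_enum : perm_eq (index_enum 'S_3) S3_words.
Proof.
apply: uniq_perm; [exact: index_enum_uniq | exact: S3_words_uniq | move=> s].
have card_words : #|S3_words| = #|'S_3| by rewrite card_Sn (card_uniqP S3_words_uniq).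
by rewrite mem_index_enum (subset_cardP card_words (subset_predT _) s).
Qed.

Lemma S3_wordP (s : 'S_3) :
  s = w_abc \/ s = w_acb \/ s = w_bac \/ s = w_bca \/ s = w_cab \/ s = w_cba.
Proof.
have : s \in S3_words by rewrite -(perm_mem S3_words_perm_enum) mem_index_enum.
by rewrite !inE; do 5! (case/orP => [/eqP->|]; [tauto|]); move/eqP->; tauto.
Qed.

Lemma sum_S3 (V : nmodType) (G : 'S_3 -> V) :
  \sum_(t : 'S_3) G t = G w_abc + G w_acb + G w_bac + G w_bca + G w_cab + G w_cba.
Proof. by rewrite (perm_big _ S3_words_perm_enum) /= !big_cons big_nil /= addr0 !addrA. Qed.

Lemma sum_mono (V : nmodType) (G : mono -> V) :
  \sum_(m : mono) G m = \sum_(s : 'S_3) G (false, s) + \sum_(s : 'S_3) G (true, s).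
Proof.
have -> : \sum_(m : mono) G m = \sum_(b : bool) \sum_(s : 'S_3) G (b, s).
  by rewrite pair_big; apply: eq_bigr => -[].
by rewrite big_bool addrC.
Qed.

Lemma eq_of_sub_mul_zero (A : ringType) (a b c e : A) : e = 0 -> a - b = c * e -> a = b.
Proof. by move=> ->; rewrite mulr0 => /eqP; rewrite subr_eq0 => /eqP. Qed.

Section Relations.
Variable F : fieldType.

Definition lsym_rel (i j k : 'I_3) : poly3 F := psub (assoc F i j k) (assoc F j i k).
Definition rsym_rel (i j k : 'I_3) : poly3 F := psub (assoc F i j k) (assoc F i k j).
Definition lcomm_rel (i j k : 'I_3) : poly3 F := psub (R F i j k) (R F j i k).
Definition b1_rel (i j k : 'I_3) : poly3 F :=
  padd (psub (L F i j k) (L F j i k))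
    (padd (psub (L F k i j) (L F i k j)) (psub (L F j k i) (L F k j i))).

Lemma LS_B1_relsE : LS_B1_rels F = [:: lsym_rel o0 o1 o2; b1_rel o0 o1 o2].
Proof. by []. Qed.

Lemma AS_LC_relsE :
  AS_LC_rels F = [:: lsym_rel o0 o1 o2; rsym_rel o0 o1 o2; lcomm_rel o0 o1 o2].
Proof. by []. Qed.

Lemma pact_mon (t : 'S_3) b i j k m :
  pact t (mon F b i j k) m = mon F b (t i) (t j) (t k) m.
Proof.
have invE x y : ((t^-1)%g x == y) = (x == t y).
  by apply/eqP/eqP => [<-|->]; rewrite ?permKV ?permK.
by case: m => b' s; rewrite /pact /mon /= !permM !invE.
Qed.

Lemma pact_add t (f g : poly3 F) m : pact t (padd f g) m = pact t f m + pact t g m.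
Proof. by []. Qed.

Lemma pact_sub t (f g : poly3 F) m : pact t (psub f g) m = pact t f m - pact t g m.
Proof. by []. Qed.

Lemma pact_lsym t i j k m : pact t (lsym_rel i j k) m = lsym_rel (t i) (t j) (t k) m.
Proof. by rewrite /lsym_rel /assoc !pact_sub /L /R !pact_mon. Qed.

Lemma pact_rsym t i j k m : pact t (rsym_rel i j k) m = rsym_rel (t i) (t j) (t k) m.
Proof. by rewrite /rsym_rel /assoc !pact_sub /L /R !pact_mon. Qed.

Lemma pact_lcomm t i j k m : pact t (lcomm_rel i j k) m = lcomm_rel (t i) (t j) (t k) m.
Proof. by rewrite /lcomm_rel !pact_sub /R !pact_mon. Qed.

Lemma pact_b1 t i j k m : pact t (b1_rel i j k) m = b1_rel (t i) (t j) (t k) m.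
Proof. by rewrite /b1_rel !(pact_add, pact_sub) /L !pact_mon. Qed.

End Relations.

Section Pairing.
Variable F : fieldType.
Implicit Types f h : poly3 F.

Lemma eq_pairing f f' h h' : f =1 f' -> h =1 h' -> pairing f h = pairing f' h'.
Proof. by move=> eq_f eq_h; apply: eq_bigr => m _; rewrite eq_f eq_h. Qed.

Lemma pairing_suml (I : finType) (G : I -> poly3 F) h :
  pairing (fun m => \sum_i G i m) h = \sum_i pairing (G i) h.
Proof.
rewrite /pairing exchange_big; apply: eq_bigr => m _.
by rewrite mulr_sumr mulr_suml.
Qed.

Lemma pairing_sumr (I : finType) f (G : I -> poly3 F) :
  pairing f (fun m => \sum_i G i m) = \sum_i pairing f (G i).
Proof. by rewrite /pairing exchange_big; apply: eq_bigr => m _; rewrite mulr_sumr. Qed.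

Lemma pairingZl c f h : pairing (fun m => c * f m) h = c * pairing f h.
Proof. by rewrite /pairing mulr_sumr; apply: eq_bigr => m _; ring. Qed.

Lemma pairingZr c f h : pairing f (fun m => c * h m) = c * pairing f h.
Proof. by rewrite /pairing mulr_sumr; apply: eq_bigr => m _; ring. Qed.

Lemma eps_permMr b (s t : 'S_3) : eps F (b, (s * t)%g) = eps F (b, s) * (-1) ^+ odd_perm t.
Proof. by rewrite /eps /= odd_permM signr_addb; case: b; rewrite ?mulNr. Qed.

Lemma pairing_pact (t t' : 'S_3) f h :
  pairing (pact t f) (pact t' h) = (-1) ^+ odd_perm t * pairing f (pact (t' * t^-1)%g h).
Proof.
rewrite /pairing (reindex_inj (h := fun m : mono => (m.1, (m.2 * t)%g))) /=; last first.
  by move=> [b s] [b' s'] /= [-> /mulIg ->].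
rewrite mulr_sumr; apply: eq_bigr => -[b s] _ /=.
by rewrite eps_permMr /pact /= mulgK invMg invgK mulgA -!mulrA mulrCA.
Qed.

Lemma in_ideal_pact_nth (gens : seq (poly3 F)) k t :
  (k < size gens)%N -> in_ideal gens (pact t (nth (@pzero F) gens k)).
Proof.
move=> lt_k; exists (fun k' t' => ((k' == k) && (t' == t))%:R) => m.
rewrite (bigD1 (Ordinal lt_k)) //= (bigD1 t) //= !eqxx mul1r.
rewrite big1 => [|t' /negbTE->]; rewrite ?andbF ?mul0r ?addr0 //.
rewrite big1 ?addr0 // => k' ne_k'; apply: big1 => t' _.
suff /negbTE-> : nat_of_ord k' != k by rewrite mul0r.
by apply: contra ne_k' => /eqP eq_k'; apply/eqP/val_inj.
Qed.

Lemma pairing_pact_lsym f u :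
  pairing f (pact u (lsym_rel F o0 o1 o2)) = pairing f (lsym_rel F (u o0) (u o1) (u o2)).
Proof. exact/eq_pairing/pact_lsym. Qed.

Lemma pairing_pact_b1 f u :
  pairing f (pact u (b1_rel F o0 o1 o2)) = pairing f (b1_rel F (u o0) (u o1) (u o2)).
Proof. exact/eq_pairing/pact_b1. Qed.

End Pairing.

Ltac expand_pairing :=
  rewrite /pairing sum_mono !sum_S3 /eps /lsym_rel /rsym_rel /lcomm_rel /b1_rel
    /assoc /padd /psub /L /R /mon /= !wordE /= ?expr0 ?expr1.

Section Orthogonality.
Variable F : fieldType.

Lemma AS_LC_rels_orthogonal (k : 'I_3) (k' : 'I_2) (u : 'S_3) :
  pairing (nth (@pzero F) (AS_LC_rels F) k) (pact u (nth (@pzero F) (LS_B1_rels F) k')) = 0.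
Proof.
rewrite AS_LC_relsE LS_B1_relsE.
case: k => [[|[|[|//]]] ?]; case: k' => [[|[|//]] ?] /=;
  rewrite ?pairing_pact_lsym ?pairing_pact_b1;
  case: (S3_wordP u) => [->|[->|[->|[->|[->|->]]]]]; expand_pairing; ring.
Qed.

Lemma AS_LC_ideal_sub_LS_B1_dual (g : poly3 F) :
  in_ideal (AS_LC_rels F) g -> in_dual (LS_B1_rels F) g.
Proof.
move=> [c eq_g] r [d eq_r].
rewrite (eq_pairing eq_g eq_r) pairing_suml big1 // => k _; rewrite pairing_suml big1 // => t _.
rewrite pairingZl pairing_sumr big1 ?mulr0 // => k' _.
rewrite pairing_sumr big1 // => t' _.
by rewrite pairingZr pairing_pact AS_LC_rels_orthogonal !mulr0.
Qed.

End Orthogonality.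

Section Dual.
Variable F : fieldType.
Implicit Types g : poly3 F.

Definition dual_coef_conditions g : Prop :=
  [/\ g (false, w_acb) = - g (false, w_cab) - g (true, w_acb) - g (true, w_cab),
      g (false, w_bca) = - g (false, w_cba) - g (true, w_bca) - g (true, w_cba),
      g (false, w_abc) = - g (false, w_bac)
                         + g (true, w_acb) + g (true, w_bca) + g (true, w_cab) + g (true, w_cba)
    & g (true, w_abc) = - g (true, w_acb) - g (true, w_bac)
                        - g (true, w_bca) - g (true, w_cab) - g (true, w_cba)].

Lemma LS_B1_dual_coef_conditions g : in_dual (LS_B1_rels F) g -> dual_coef_conditions g.
Proof.
move=> dual_g.
have orth k u : (k < 2)%N -> pairing g (pact u (nth (@pzero F) (LS_B1_rels F) k)) = 0.
  by move=> lt_k; apply/dual_g/in_ideal_pact_nth.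
have lsym_acb := orth 0%N w_acb isT; have lsym_bca := orth 0%N w_bca isT.
have b1_abc := orth 1%N w_abc isT; have lsym_abc := orth 0%N w_abc isT.
rewrite /= ?pairing_pact_lsym ?pairing_pact_b1 !wordE in lsym_acb lsym_bca b1_abc lsym_abc.
have coef_acb : g (false, w_acb) = - g (false, w_cab) - g (true, w_acb) - g (true, w_cab).
  by apply: (eq_of_sub_mul_zero (c := -1) lsym_acb); expand_pairing; ring.
have coef_bca : g (false, w_bca) = - g (false, w_cba) - g (true, w_bca) - g (true, w_cba).
  by apply: (eq_of_sub_mul_zero (c := 1) lsym_bca); expand_pairing; ring.
have coef_abc : g (false, w_abc) = - g (false, w_bac)
                   + g (true, w_acb) + g (true, w_bca) + g (true, w_cab) + g (true, w_cba).
  by apply: (eq_of_sub_mul_zero (c := 1) b1_abc); expand_pairing; rewrite coef_acb coef_bca; ring.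
split=> //; apply: (eq_of_sub_mul_zero (c := 1) lsym_abc).
by expand_pairing; rewrite coef_abc; ring.
Qed.

(* The coefficient of [pact t] of the [k]-th AS/LC relation in [g], with [t]
   identified by the pair [(t o0, t o1)]. *)
Definition AS_LC_coef g (k : nat) (t : 'S_3) : F :=
  match k, nat_of_ord (t o0), nat_of_ord (t o1) with
  | 0, 0, 1 => - g (false, w_bac) + g (true, w_bca) + g (true, w_cba)
  | 0, 0, 2 => - g (false, w_cab)
  | 0, 1, 2 => - g (false, w_cba)
  | 1, 0, 1 => g (true, w_acb) + g (true, w_cab)
  | 1, 1, 0 => g (true, w_bca) + g (true, w_cba)
  | 2, 0, 1 => - g (false, w_bac) - g (true, w_bac)
  | 2, 0, 2 => - g (false, w_cab) - g (true, w_cab)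
  | 2, 1, 2 => - g (false, w_cba) - g (true, w_cba)
  | _, _, _ => 0
  end.

Lemma AS_LC_ideal_of_coef_conditions g :
  dual_coef_conditions g -> in_ideal (AS_LC_rels F) g.
Proof.
move=> [coef_acb coef_bca coef_abc coef_R_abc]; exists (AS_LC_coef g) => -[b s].
rewrite AS_LC_relsE /= !big_ord_recl big_ord0 /= !sum_S3 /AS_LC_coef !wordE /=.
rewrite !mul0r ?add0r ?addr0 ?pact_lsym ?pact_rsym ?pact_lcomm !wordE.
case: (S3_wordP s) => [->|[->|[->|[->|[->|->]]]]]; case: b;
  rewrite /lsym_rel /rsym_rel /lcomm_rel /assoc /psub /L /R /mon /= !wordE /=
    ?coef_acb ?coef_bca ?coef_abc ?coef_R_abc; ring.
Qed.

End Dual.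

Theorem mainTheorem4 (F : fieldType) (hchar : [pchar F]%R =i pred0) :
  forall g : poly3 F, in_dual (LS_B1_rels F) g <-> in_ideal (AS_LC_rels F) g.
Proof.
move=> g; split.
- by move/LS_B1_dual_coef_conditions/AS_LC_ideal_of_coef_conditions.
- exact: AS_LC_ideal_sub_LS_B1_dual.
Qed.
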